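(* Let $n\ge 2$ and $\lambda>0$. Then the CUSUM classifier $h^{\mathrm{CUSUM}}_\lambda:\mathbb{R}^n\to\{0,1\}$, $h^{\mathrm{CUSUM}}_\lambda(\boldsymbol{x})=\mathbb{1}\{\|\mathcal{C}(\boldsymbol{x})\|_\infty>\lambda\}$, belongs to $\mathcal{H}_{1,2n-2}$.
   Context: For $i\in[n-1]$ let $\boldsymbol{v}_i=\bigl(\sqrt{\tfrac{n-i}{in}}\boldsymbol{1}_i^\top,\,-\sqrt{\tfrac{i}{(n-i)n}}\boldsymbol{1}_{n-i}^\top\bigr)^\top\in\mathbb{R}^n$, where $\boldsymbol{1}_k$ is the all-ones vector of length $k$, and define the CUSUM transformation $\mathcal{C}(\boldsymbol{x})=(\boldsymbol{v}_1^\top\boldsymbol{x},\ldots,\boldsymbol{v}_{n-1}^\top\boldsymbol{x})^\top$. Neural network classes: for $L\ge1$ and widths $\boldsymbol{m}=(m_1,\ldots,m_L)$, set $m_0=n$, $m_{L+1}=1$; for $\boldsymbol{b}\in\mathbb{R}^r$ let $\sigma_{\boldsymbol{b}}(y_1,\ldots,y_r)=(\max(y_1-b_1,0),\ldots,\max(y_r-b_r,0))$. $\mathcal{H}_{L,\boldsymbol{m}}$ is the class of all functions $h:\mathbb{R}^n\to\{0,1\}$ of the form $h(\boldsymbol{x})=\sigma^*_\lambda W_L\sigma_{\boldsymbol{b}_L}W_{L-1}\sigma_{\boldsymbol{b}_{L-1}}\cdots W_1\sigma_{\boldsymbol{b}_1}W_0\boldsymbol{x}$, where $\sigma^*_\lambda(x)=\mathbb{1}\{x>\lambda\}$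 with $\lambda>0$, $W_\ell\in\mathbb{R}^{m_{\ell+1}\times m_\ell}$ for $\ell=0,\ldots,L$, and $\boldsymbol{b}_\ell\in\mathbb{R}^{m_\ell}$. $\mathcal{H}_{1,m}$ denotes the class with one hidden layer of width $m$. *)

(* Reals are modelled by an arbitrary real closed field R
   (Num.sqrt available); the concrete reals are an instance. *)
From HB Require Import structures.
From mathcomp Require Import all_boot all_order all_algebra.
Set Implicit Arguments. Unset Strict Implicit. Unset Printing Implicit Defensive.
Import Order.TTheory GRing.Theory Num.Theory.
Local Open Scope ring_scope.

Definition relu_b (R : rcfType) (m : nat) (b y : 'cV[R]_m) : 'cV[R]_m :=
  \col_i Num.max (y i 0 - b i 0) 0.

(* A ReLU network with input dimension a and hidden widths ms = (m_1,...,m_L):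
   Hidden W b N  computes  x |-> N (sigma_b (W x)),  Out W computes x |-> W x
   (W a 1 x a matrix).  So the network
   Hidden W_0 b_1 (Hidden W_1 b_2 (... (Out W_L)))
   realises  W_L sigma_{b_L} W_{L-1} ... W_1 sigma_{b_1} W_0 x. *)
Inductive net (R : rcfType) : nat -> seq nat -> Type :=
| Out : forall a, 'M[R]_(1, a) -> net R a [::]
| Hidden : forall a m ms, 'M[R]_(m, a) -> 'cV[R]_m -> net R m ms -> net R a (m :: ms).

Fixpoint net_eval (R : rcfType) (a : nat) (ms : seq nat) (N : net R a ms)
  : 'cV[R]_a -> R :=
  match N in net _ a ms return 'cV[R]_a -> R with
  | Out _ W => fun x => (W *m x) 0 0
  | Hidden _ _ _ W b N' => fun x => net_eval N' (relu_b b (W *m x))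
  end.

(* The class H_{L,m} with L = size ms (>= 1) and widths ms, input dim n:
   h(x) = 1{ N(x) > lambda } for some network N and lambda > 0. *)
Definition in_H (R : rcfType) (n : nat) (ms : seq nat) (h : 'cV[R]_n -> bool)
  : Prop :=
  (0 < size ms)%N /\
  exists lam : R, 0 < lam /\
    exists N : net R n ms, forall x, h x = (lam < net_eval N x).

(* Entry j (0-based) of the CUSUM vector v_k, k in [n-1] (1-based). *)
Definition cusum_v (R : rcfType) (n k j : nat) : R :=
  if (j < k)%N then Num.sqrt ((n - k)%:R / (k%:R * n%:R))
  else - Num.sqrt (k%:R / ((n - k)%:R * n%:R)).

(* C(x) in R^{n-1}; row i corresponds to k = i+1. *)
Definition cusum (R : rcfType) (n : nat) (x : 'cV[R]_n) : 'cV[R]_(n.-1) :=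
  \col_(i < n.-1) \sum_(j < n) cusum_v R n i.+1 j * x j 0.

Definition sup_norm (R : rcfType) (m : nat) (y : 'cV[R]_m) : R :=
  \big[Num.max/0]_(i < m) `|y i 0|.

Definition h_cusum (R : rcfType) (n : nat) (lam : R) (x : 'cV[R]_n) : bool :=
  lam < sup_norm (cusum x).

(** Feed the [n - 1] CUSUM statistics [t_i] and their negatives into the hidden
   layer with bias [- lam] and sum the outputs.  Since for [lam >= 0]
   [max (t + lam) 0 + max (- t + lam) 0 = 2 lam + max (|t| - lam) 0],
   the network computes [2 (n - 1) lam + sum_i max (|t_i| - lam) 0], which
   exceeds the threshold [2 (n - 1) lam] exactly when some [|t_i| > lam]. *)
From mathcomp Require Import all_boot all_order all_algebra.
From mathcomp Require Import lra zify.
Set Implicit Arguments. Unset Strict Implicit. Unset Printing Implicit Defensive.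
Import Order.TTheory GRing.Theory Num.Theory.
Local Open Scope ring_scope.

Lemma maxr0_shift_opp_add (R : realFieldType) (lam t : R) : 0 <= lam ->
  Num.max (t + lam) 0 + Num.max (- t + lam) 0 = lam *+ 2 + Num.max (`|t| - lam) 0.
Proof.
move=> lam_ge0; wlog t_ge0 : t / 0 <= t => [sym|].
  have [|t_lt0] := lerP 0 t; first exact: sym.
  by have := sym (- t); rewrite opprK normrN addrC; apply; rewrite oppr_ge0 ltW.
by rewrite ger0_norm // /Num.max; do 3 case: ltP => ?; lra.
Qed.

Lemma lt_sup_norm_sum_excess (R : rcfType) (k : nat) (lam : R) (y : 'cV[R]_k) :
  0 <= lam -> (lam < sup_norm y) = (0 < \sum_i Num.max (`|y i 0| - lam) 0).
Proof.
move=> lam_ge0; have excess_ge0 i : 0 <= Num.max (`|y i 0| - lam) 0.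
  by rewrite le_max lexx orbT.
rewrite lt0r sumr_ge0 // andbT psumr_neq0 //.
under eq_has => i do rewrite /= lt_max ltxx orbF subr_gt0.
apply/idP/idP => [|/hasP [i _ lt_lam_yi]]; last exact: lt_le_trans lt_lam_yi (le_bigmax _ _ _).
apply: contraTT => /hasPn yi_le_lam; rewrite -leNgt.
by apply: bigmax_le => // i _; rewrite leNgt yi_le_lam ?mem_index_enum.
Qed.

Definition abs_excess_net (R : rcfType) (a k : nat) (A : 'M[R]_(k, a)) (lam : R)
  : net R a [:: (k + k)%N] :=
  Hidden (col_mx A (- A)) (const_mx (- lam)) (Out (const_mx 1)).

Lemma abs_excess_netE (R : rcfType) (a k : nat) (A : 'M[R]_(k, a)) (lam : R)
    (x : 'cV[R]_a) : 0 <= lam ->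
  net_eval (abs_excess_net A lam) x
  = lam *+ (k + k) + \sum_i Num.max (`|(A *m x) i 0| - lam) 0.
Proof.
move=> lam_ge0; rewrite /= mul_col_mx mulNmx mxE big_split_ord /=.
move: (A *m x) => y.
under eq_bigr => i do rewrite mxE mul1r mxE col_mxEu !mxE opprK.
under [X in _ + X]eq_bigr => i do rewrite mxE mul1r mxE col_mxEd !mxE opprK.
rewrite -big_split /=.
under eq_bigr => i _ do rewrite maxr0_shift_opp_add //.
by rewrite big_split /= sumr_const card_ord -mulrnA mul2n -addnn.
Qed.

Definition cusum_mx (R : rcfType) (n : nat) : 'M[R]_(n.-1, n) :=
  \matrix_(i, j) cusum_v R n i.+1 j.

Lemma cusum_mxE (R : rcfType) (n : nat) (x : 'cV[R]_n) : cusum x = cusum_mx R n *m x.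
Proof.
apply/matrixP => i j; rewrite !mxE.
by apply: eq_bigr => l _; rewrite mxE (ord1 j).
Qed.

Theorem lemma3p1 (R : rcfType) (n : nat) (lam : R) :
  (2 <= n)%N -> 0 < lam -> @in_H R n [:: (2 * n - 2)%N] (@h_cusum R n lam).
Proof.
move=> n_ge2 lam_gt0; split=> //.
rewrite (_ : (2 * n - 2 = n.-1 + n.-1)%N); last by lia.
exists (lam *+ (n.-1 + n.-1)); split; first by rewrite mulrn_wgt0 //; lia.
exists (abs_excess_net (cusum_mx R n) lam) => x.
by rewrite abs_excess_netE ?ltW // ltrDl /h_cusum cusum_mxE lt_sup_norm_sum_excess ?ltW.
Qed.
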